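(* Let $\mathbf G$ be a finite group and let $p_1,\dots,p_n$ ($n\ge 2$) be all the distinct prime divisors of $\lvert G\rvert$. Let $\Gamma=\mathcal G_e(\mathbf G)$ and $\Gamma_{p_i}=\Gamma[G_{p_i}]$. Suppose that for each $i>2$, $\mathbf G$ has a unique Sylow $p_i$-subgroup and it is cyclic. Then the strong product $\Gamma_{p_1}\boxtimes\Gamma_{p_2}\boxtimes\cdots\boxtimes\Gamma_{p_n}$ is a Berge graph.
   Context: The enhanced power graph $\mathcal G_e(\mathbf G)$ has vertex set $G$, distinct $x,y$ adjacent iff $\langle x,y\rangle$ is cyclic. For a prime $p$, $G_p$ is the set of elements of $\mathbf G$ whose order is a power of $p$ (including the identity); $\Gamma[X]$ is the induced subgraph on $X$. The strong product $\boxtimes_{i=1}^n\Gamma_i$ has vertex set $\prod_i V(\Gamma_i)$, and distinct tuples $\bar x,\bar y$ are adjacent iff for every $i$, $\bar x(i)=\bar y(i)$ or $\bar x(i)\sim_{\Gamma_i}\bar y(i)$. A graph is Berge if neither it nor its complement contains an induced cycle of odd length at least $5$. *)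

From mathcomp Require Import all_boot fingroup morphism cyclic pgroup sylow.
Set Implicit Arguments. Unset Strict Implicit. Unset Printing Implicit Defensive.

(* Finite simple graphs given by a vertex set V : {set T} in a finType T and
   an adjacency relation e (only used on distinct vertices of V). *)

Definition induced_cycle (T : finType) (V : {set T}) (e : rel T) (k : nat)
    (c : 'I_k -> T) : Prop :=
  injective c /\ (forall i, c i \in V) /\
  (forall i j : 'I_k, i != j ->
     e (c i) (c j) = ((i.+1 %% k == j) || (j.+1 %% k == i))).

Definition has_odd_hole (T : finType) (V : {set T}) (e : rel T) : Prop :=
  exists k (c : 'I_k -> T), [/\ odd k, 5 <= k & induced_cycle V e c].

Definition compl_rel (T : finType) (e : rel T) : rel T :=
  fun x y => (x != y) && ~~ e x y.

Definition berge (T : finType) (V : {set T}) (e : rel T) : Prop :=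
  ~ has_odd_hole V e /\ ~ has_odd_hole V (compl_rel e).

Definition epg_rel (gT : finGroupType) : rel gT :=
  fun x y => (x != y) && cyclic <<[set x; y]>>.

Definition Gp (gT : finGroupType) (G : {set gT}) (p : nat) : {set gT} :=
  [set x in G | p_elt p x].

Definition sprod_V (T : finType) (n : nat) (Vs : 'I_n -> {set T}) :
    {set {ffun 'I_n -> T}} :=
  [set f : {ffun 'I_n -> T} | [forall i, f i \in Vs i]].

Definition sprod_rel (T : finType) (n : nat) (es : 'I_n -> rel T) :
    rel {ffun 'I_n -> T} :=
  fun f g => (f != g) && [forall i, (f i == g i) || es i (f i) (g i)].

From mathcomp Require Import all_boot fingroup morphism cyclic pgroup sylow.
From mathcomp Require Import zify.
Set Implicit Arguments. Unset Strict Implicit. Unset Printing Implicit Defensive.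

(* Call x, y "comparable" when <x, y> is cyclic.  For p-elements
   comparability means that one of x, y is a power of the other, and from this
   one sees that a 4-vertex path a - b - c - d of the enhanced power graph on
   p-elements can never have both non-edges a c and b d.
   In the strong product, every coordinate i >= 2 is a cyclic Sylow subgroup, so
   all its vertices are comparable and two distinct tuples are non-adjacent iff
   they are incomparable in coordinate 0 or in coordinate 1.  By the previous
   remark, along every induced path a - b - c - d of the product the two
   non-edges a c and b d are "caused" by different coordinates. *)

Definition flips_on_paths (T : finType) (V : {set T}) (e : rel T)
    (lab : T -> T -> bool) : Prop :=
  forall a b c d, a \in V -> b \in V -> c \in V -> d \in V ->
    a != c -> ~~ e a c -> b != d -> ~~ e b d -> e b a -> e b c -> e c d ->
    lab b d = ~~ lab a c.

Section CycleWalk.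
Variables (T : finType) (V : {set T}) (r : rel T) (k : nat) (c : 'I_k -> T).
Hypotheses (k_gt0 : 0 < k) (c_cycle : induced_cycle V r c).

Definition walk (m : nat) : T := c (Ordinal (ltn_pmod m k_gt0)).

Lemma walk_in m : walk m \in V.
Proof. by case: c_cycle => _ [cV _]; apply: cV. Qed.

Lemma walk_addk m : walk (m + k) = walk m.
Proof. by congr c; apply: val_inj; rewrite /= modnDr. Qed.

Lemma walk_ord_neq m d :
  0 < d < k -> Ordinal (ltn_pmod m k_gt0) != Ordinal (ltn_pmod (m + d) k_gt0).
Proof.
move=> /andP[d_gt0 d_ltk]; apply/negP => /eqP/(congr1 val) /= /eqP.
by rewrite -{1}(addn0 m) eqn_modDl mod0n modn_small //; lia.
Qed.

Lemma walk_neq m d : 0 < d < k -> walk m != walk (m + d).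
Proof.
by move=> hd; case: c_cycle => c_inj _; rewrite (inj_eq c_inj) walk_ord_neq.
Qed.

Lemma walk_rel m d : 0 < d < k ->
  r (walk m) (walk (m + d)) = (d == 1) || (d.+1 == k).
Proof.
move=> hd; case: c_cycle => _ [_ c_adj]; rewrite c_adj ?walk_ord_neq //=.
congr (_ || _).
  rewrite -addn1 modnDml eqn_modDl modn_small; last by lia.
  by rewrite modn_small //; lia.
rewrite -addn1 modnDml -addnA -{2}(addn0 m) eqn_modDl addn1 mod0n.
have [->|ne_dk] := eqVneq d.+1 k; first by rewrite modnn.
by rewrite modn_small //; lia.
Qed.

End CycleWalk.

Lemma compl_relE (T : finType) (e : rel T) x y :
  x != y -> compl_rel e x y = ~~ e x y.
Proof. by rewrite /compl_rel => ->. Qed.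

Section FlippingLabels.
Variables (T : finType) (V : {set T}) (e : rel T) (lab : T -> T -> bool).
Hypotheses (e_sym : symmetric e) (lab_flips : flips_on_paths V e lab).

(* Along an odd hole w_0 ... w_(k-1) the label of the non-edge (w_m, w_(m+2))
   flips at every step m -> m+1, which is impossible for odd k. *)
Lemma flips_no_odd_hole : ~ has_odd_hole V e.
Proof.
move=> [k [c [k_odd k_ge5 c_hole]]].
have k_gt0 : 0 < k by lia.
pose w := walk c k_gt0.
have adj m m' : m' = m + 1 -> e (w m) (w m').
  by move=> ->; rewrite (walk_rel _ c_hole) //; lia.
have nadj m m' : m' = m + 2 -> ~~ e (w m) (w m').
  by move=> ->; rewrite (walk_rel _ c_hole) //; lia.
have neq m m' : m' = m + 2 -> w m != w m'.
  by move=> ->; rewrite (walk_neq _ c_hole) //; lia.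
have wV m : w m \in V := walk_in k_gt0 c_hole m.
pose P m := lab (w m) (w (m + 2)).
have P_flip m : P (m + 1) = ~~ P m.
  apply: (lab_flips (wV m) (wV (m + 1)) (wV (m + 2)) (wV (m + 1 + 2))).
  - exact: neq.
  - exact: nadj.
  - by apply: neq; lia.
  - by apply: nadj; lia.
  - by rewrite e_sym; apply: adj.
  - by apply: adj; lia.
  - by apply: adj; lia.
have P_parity m : P m = odd m (+) P 0.
  by elim: m => [|m IH] //; rewrite -addn1 P_flip IH addn1 /= negb_add.
have : P (0 + k) = P 0 by rewrite /P /w walk_addk addnAC walk_addk.
by rewrite P_parity add0n k_odd; case: (P 0).
Qed.

(* In an antihole, consecutive vertices are the non-adjacent ones; applying
   the flip property to six consecutive vertices gives a contradiction. *)
Lemma flips_no_odd_antihole : ~ has_odd_hole V (compl_rel e).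
Proof.
move=> [k [c [_ k_ge5 c_hole]]].
have k_gt0 : 0 < k by lia.
pose w := walk c k_gt0.
have e_at m d : 0 < d < k -> e (w m) (w (m + d)) = ~~ ((d == 1) || (d.+1 == k)).
  move=> hd; rewrite -(walk_rel _ c_hole m hd) compl_relE ?negbK //.
  exact: (walk_neq _ c_hole).
have nadj m m' : m' = m + 1 -> ~~ e (w m) (w m').
  by move=> ->; rewrite e_at //; lia.
have neq m m' : m' = m + 1 -> w m != w m'.
  by move=> ->; rewrite (walk_neq _ c_hole) //; lia.
have adj m m' d : m' = m + d -> 2 <= d <= 3 -> e (w m) (w m').
  by move=> -> hd; rewrite e_at //; lia.
have wV m : w m \in V := walk_in k_gt0 c_hole m.
pose Q m := lab (w m) (w (m + 1)).
have flip3 j : Q (j + 3) = ~~ Q j.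
  apply: (lab_flips (wV j) (wV (j + 3)) (wV (j + 1)) (wV (j + 3 + 1)));
    do ?[exact: neq | exact: nadj].
  - by rewrite e_sym; apply: (adj _ _ 3).
  - by rewrite e_sym; apply: (adj _ _ 2); lia.
  - by apply: (adj _ _ 3); lia.
have flip1 j : Q (j + 1) = ~~ Q (j + 3).
  apply: (lab_flips (wV (j + 3)) (wV (j + 1)) (wV (j + 3 + 1)) (wV (j + 1 + 1)));
    do ?[exact: neq | exact: nadj].
  - by apply: (adj _ _ 2); lia.
  - by apply: (adj _ _ 3); lia.
  - by rewrite e_sym; apply: (adj _ _ 2); lia.
move: (flip3 0) (flip1 0) (flip3 1) (flip1 1) (flip3 2) (flip1 2).
by rewrite /=; case: (Q 0) (Q 1) (Q 2) (Q 3) (Q 4) (Q 5) => [] [] [] [] [] [].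
Qed.

Lemma flips_berge : berge V e.
Proof. by split; [apply: flips_no_odd_hole | apply: flips_no_odd_antihole]. Qed.

End FlippingLabels.

Local Open Scope group_scope.

Definition epg_cmp (gT : finGroupType) (x y : gT) : bool := cyclic <<[set x; y]>>.

Lemma epg_cmpE (gT : finGroupType) (x y : gT) :
  (x == y) || epg_rel x y = epg_cmp x y.
Proof.
rewrite /epg_rel /epg_cmp; case: eqP => [->|] //=.
by rewrite setUid cycle_cyclic.
Qed.

Lemma epg_cmp_sym (gT : finGroupType) (x y : gT) : epg_cmp x y = epg_cmp y x.
Proof. by rewrite /epg_cmp setUC. Qed.

Lemma epg_cmp_in_cyclic (gT : finGroupType) (P : {group gT}) (x y : gT) :
  cyclic P -> x \in P -> y \in P -> epg_cmp x y.
Proof.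
by move=> cP xP yP; apply: cyclicS cP; rewrite gen_subG subUset !sub1set xP yP.
Qed.

(* Two comparable p-elements: one is a power of the other, since the
   subgroups of a cyclic group are determined by their (here p-power) orders. *)
Lemma p_elt_cmp_cycle (gT : finGroupType) (p : nat) (x y : gT) :
  p_elt p x -> p_elt p y -> epg_cmp x y -> (x \in <[y]>) || (y \in <[x]>).
Proof.
move=> px py cH.
have xH : <[x]> \subset <<[set x; y]>> by rewrite cycle_subG mem_gen // !inE eqxx.
have yH : <[y]> \subset <<[set x; y]>>.
  by rewrite cycle_subG mem_gen // !inE eqxx orbT.
have [a ox] := p_natP px; have [b oy] := p_natP py.
rewrite -!cycle_subG -(cardSg_cyclic cH xH yH) -(cardSg_cyclic cH yH xH).
rewrite -!orderE ox oy.
case: (leqP a b) => ab; first by rewrite dvdn_exp2l.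
by rewrite orbC dvdn_exp2l // ltnW.
Qed.

Lemma p_elt_cmp_cycle_trans (gT : finGroupType) (p : nat) (x y z : gT) :
  p_elt p x -> p_elt p y -> epg_cmp y x -> z \in <[y]> -> epg_cmp x z.
Proof.
move=> px py yx zy; case/orP: (p_elt_cmp_cycle py px yx) => [yx' | xy].
  by apply: (epg_cmp_in_cyclic (cycle_cyclic x)) (cycle_id x) _;
     apply: subsetP zy; rewrite cycle_subG.
exact: (epg_cmp_in_cyclic (cycle_cyclic y)).
Qed.

Lemma p_elt_no_split_path (gT : finGroupType) (p : nat) (x y z w : gT) :
  p_elt p x -> p_elt p y -> p_elt p z -> p_elt p w ->
  ~~ epg_cmp x z -> epg_cmp y x -> epg_cmp y z -> ~~ epg_cmp y w ->
  epg_cmp z w -> False.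
Proof.
move=> px py pz pw nxz yx yz nyw zw.
case/orP: (p_elt_cmp_cycle py pz yz) => [yz' | zy].
  by move/negP: nyw; rewrite epg_cmp_sym (p_elt_cmp_cycle_trans pw pz _ yz')
       // epg_cmp_sym.
by move/negP: nxz; rewrite (p_elt_cmp_cycle_trans px py yx zy).
Qed.

Lemma in_unique_Sylow (gT : finGroupType) (G P : {group gT}) (p : nat) (x : gT) :
  'Syl_p(G) = [set P] -> x \in G -> p_elt p x -> x \in P.
Proof.
move=> sylP xG px.
have sxG : <[x]> \subset G by rewrite cycle_subG.
have [Q sylQ sxQ] := Sylow_superset sxG px.
have : Q \in 'Syl_p(G) by rewrite inE.
by rewrite sylP => /set1P defQ; rewrite -cycle_subG -defQ.
Qed.

Lemma unique_cyclic_Sylow_cmp (gT : finGroupType) (G P : {group gT}) (p : nat)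
    (x y : gT) :
  'Syl_p(G) = [set P] -> cyclic P -> x \in Gp G p -> y \in Gp G p ->
  epg_cmp x y.
Proof.
move=> sylP cP; rewrite !inE => /andP[xG px] /andP[yG py].
exact: (epg_cmp_in_cyclic cP (in_unique_Sylow sylP xG px)
          (in_unique_Sylow sylP yG py)).
Qed.

Section StrongProductEPG.
Variables (gT : finGroupType) (n : nat) (Vs : 'I_n -> {set gT})
  (pr : 'I_n -> nat) (i0 i1 : 'I_n).
Hypothesis Vs_pelt : forall i x, x \in Vs i -> p_elt (pr i) x.
Hypothesis Vs_complete : forall i, i != i0 -> i != i1 ->
  forall x y, x \in Vs i -> y \in Vs i -> epg_cmp x y.

Let V := sprod_V Vs.
Let e := sprod_rel (fun _ : 'I_n => @epg_rel gT).

Lemma sprod_pelt f i : f \in V -> p_elt (pr i) (f i).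
Proof. by rewrite inE => /forallP/(_ i)/Vs_pelt. Qed.

Lemma sprod_adjE f g : e f g = (f != g) && [forall i, epg_cmp (f i) (g i)].
Proof. by congr (_ && _); apply: eq_forallb => i; rewrite epg_cmpE. Qed.

Lemma sprod_adj_cmp f g i : e f g -> epg_cmp (f i) (g i).
Proof. by rewrite sprod_adjE => /andP[_ /forallP]. Qed.

Lemma sprod_sym : symmetric e.
Proof.
move=> f g; rewrite !sprod_adjE eq_sym; congr (_ && _).
by apply: eq_forallb => i; rewrite epg_cmp_sym.
Qed.

Lemma sprod_nonadj f g : f \in V -> g \in V -> f != g -> ~~ e f g ->
  ~~ epg_cmp (f i0) (g i0) || ~~ epg_cmp (f i1) (g i1).
Proof.
rewrite sprod_adjE !inE => /forallP fV /forallP gV -> /=.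
rewrite negb_forall => /existsP[i ncmp].
have [<-|ne0] := eqVneq i i0; first by rewrite ncmp.
have [<-|ne1] := eqVneq i i1; first by rewrite ncmp orbT.
by rewrite (Vs_complete ne0 ne1 (fV i) (gV i)) in ncmp.
Qed.

Lemma sprod_no_split_path i a b c d : a \in V -> b \in V -> c \in V -> d \in V ->
  ~~ epg_cmp (a i) (c i) -> e b a -> e b c -> ~~ epg_cmp (b i) (d i) -> e c d ->
  False.
Proof.
move=> aV bV cV dV nac ba bc nbd cd.
exact: (p_elt_no_split_path (sprod_pelt i aV) (sprod_pelt i bV)
  (sprod_pelt i cV) (sprod_pelt i dV) nac (sprod_adj_cmp i ba)
  (sprod_adj_cmp i bc) nbd (sprod_adj_cmp i cd)).
Qed.

(* The non-edges a c and b d of a path a - b - c - d are caused by different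
   coordinates among i0 and i1, so "incomparable in coordinate i0" flips. *)
Lemma sprod_flips : flips_on_paths V e (fun f g => ~~ epg_cmp (f i0) (g i0)).
Proof.
move=> a b c d aV bV cV dV nac nac' nbd nbd' ba bc cd.
have := sprod_nonadj aV cV nac nac'; have := sprod_nonadj bV dV nbd nbd'.
have := sprod_no_split_path (i := i0) aV bV cV dV.
have := sprod_no_split_path (i := i1) aV bV cV dV.
case: (epg_cmp (a i0) _) (epg_cmp (a i1) _) (epg_cmp (b i0) _) (epg_cmp (b i1) _)
  => [] [] [] [] //= split1 split0 _ _;
  by [case: (split0 isT ba bc isT cd) | case: (split1 isT ba bc isT cd)].
Qed.

Lemma sprod_epg_berge : berge V e.
Proof. exact: flips_berge sprod_sym sprod_flips. Qed.

End StrongProductEPG.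

Theorem mainTheorem3 (gT : finGroupType) (G : {group gT}) (ps : seq nat) :
  uniq ps ->
  (forall p, (p \in ps) = (p \in primes #|G|)) ->
  2 <= size ps ->
  (forall i, 2 <= i < size ps ->
     exists P : {group gT}, 'Syl_(nth 0 ps i)(G) = [set P] /\ cyclic P) ->
  berge (sprod_V (fun i : 'I_(size ps) => Gp G (nth 0 ps i)))
        (sprod_rel (fun _ : 'I_(size ps) => @epg_rel gT)).
Proof.
move=> _ _ n_gt1 syl_cyclic.
apply: (@sprod_epg_berge _ _ _ (fun i => nth 0 ps i)
          (Ordinal (ltnW n_gt1)) (Ordinal n_gt1)).
  by move=> i x; rewrite inE => /andP[].
move=> i ne0 ne1; have i_ge2 : 2 <= i.
  by move: ne0 ne1; rewrite -!(inj_eq val_inj) /=; lia.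
have [P [sylP cP]] := syl_cyclic i (introT andP (conj i_ge2 (ltn_ord i))).
by move=> x y; apply: unique_cyclic_Sylow_cmp sylP cP.
Qed.
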